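(* Let $A\subset\mathbb{C}^n$ be a set-germ at $0$ with $0\in\overline{A}$. Then $A$ satisfies condition (CSSP) if and only if $A$ satisfies condition (SSP) and $S^1D(A)=D(A)$, where $S^1=\{e^{i\theta}:\theta\in\mathbb{R}\}$. Consequently, if $A$ satisfies condition (SSP), then both $S^1A$ and $\mathbb{C}A$ satisfy condition (CSSP).
   Context: Identify $\mathbb{C}^n$ with $\mathbb{R}^{2n}$. For a set-germ $A$ at $0$ with $0\in\overline A$, $D(A)=\{a\in S^{2n-1}:\exists\, x_i\in A\setminus\{0\},\ x_i\to0,\ x_i/\|x_i\|\to a\}$, and the complex tangent cone is $LD^*(A)=\{v\in\mathbb{C}^n:\exists\, c_i\in\mathbb{C},\ \exists\, v_i\in A\setminus\{0\},\ v_i\to0,\ c_iv_i\to v\}$. For sequences, $\|u_m\|\ll\|v_m\|,\|w_m\|$ means $\|u_m\|/\|v_m\|\to0$ and $\|u_m\|/\|w_m\|\to0$. $A$ satisfies condition (SSP) if for every sequence $a_m\to0$ with $\lim a_m/\|a_m\|\in D(A)$ there is a sequence $b_m\in A$ with $\|a_m-b_m\|\ll\|a_m\|,\|b_m\|$. $A$ satisfies condition (CSSP) if for every sequence $a_m\in\mathbb{C}^n$ tending to $0$ with $\lim a_m/\|a_m\|\in LD^*(A)$ there is a sequence $b_m\in A$ with $\|a_m-b_m\|\ll\|a_m\|,\|b_m\|$. Here $S^1D(A)=\{ca: c\in S^1, a\in D(A)\}$, $S^1A=\{ca:c\in S^1,a\in A\}$, $\mathbb{C}A=\{ca:c\in\mathbb{C},a\in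 A\}$. *)

(* R : realType, complex numbers R[i] (mathcomp-real-closed),
   C^n = 'rV[R[i]]_n, identified with R^{2n} via the Euclidean norm below. *)
From mathcomp Require Import all_boot all_order all_algebra all_classical all_reals.
From mathcomp Require Import complex.
Set Implicit Arguments. Unset Strict Implicit. Unset Printing Implicit Defensive.
Import Order.TTheory GRing.Theory Num.Theory.
Local Open Scope ring_scope.

Section Defs.
Variables (R : realType) (n : nat).
Local Notation pt := 'rV[R[i]]_n.

Definition cnorm (x : pt) : R :=
  Num.sqrt (\sum_(j < n) (complex.Re (x 0 j) ^+ 2 + complex.Im (x 0 j) ^+ 2)).

Definition cvg_pt (u : nat -> pt) (l : pt) : Prop :=
  forall e : R, 0 < e -> exists N, forall m, (N <= m)%N -> cnorm (u m - l) < e.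

Definition nrmz (x : pt) : pt := (Complex (cnorm x)^-1 0) *: x.

Definition zero_in_closure (A : pt -> Prop) : Prop :=
  forall e : R, 0 < e -> exists x, A x /\ cnorm x < e.

Definition Dset (A : pt -> Prop) (a : pt) : Prop :=
  cnorm a = 1 /\
  exists x : nat -> pt, (forall i, A (x i) /\ x i <> 0) /\
    cvg_pt x 0 /\ cvg_pt (fun i => nrmz (x i)) a.

Definition LDstar (A : pt -> Prop) (v : pt) : Prop :=
  exists (c : nat -> R[i]) (w : nat -> pt), (forall i, A (w i) /\ w i <> 0) /\
    cvg_pt w 0 /\ cvg_pt (fun i => c i *: w i) v.

(* ||a_m - b_m|| << ||a_m||, ||b_m|| : both ratios tend to 0
   (stated without division) *)
Definition negligible (a b : nat -> pt) : Prop :=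
  forall e : R, 0 < e -> exists N, forall m, (N <= m)%N ->
    cnorm (a m - b m) <= e * cnorm (a m) /\ cnorm (a m - b m) <= e * cnorm (b m).

Definition approach_dir (S : pt -> Prop) (a : nat -> pt) : Prop :=
  (forall m, a m <> 0) /\ cvg_pt a 0 /\
  exists l, cvg_pt (fun m => nrmz (a m)) l /\ S l.

Definition SSP (A : pt -> Prop) : Prop :=
  forall a : nat -> pt, approach_dir (Dset A) a ->
    exists b : nat -> pt, (forall m, A (b m)) /\ negligible a b.

Definition CSSP (A : pt -> Prop) : Prop :=
  forall a : nat -> pt, approach_dir (LDstar A) a ->
    exists b : nat -> pt, (forall m, A (b m)) /\ negligible a b.

Definition S1mul (X : pt -> Prop) (y : pt) : Prop :=
  exists (c : R[i]) (x : pt), `|c| = 1 /\ X x /\ y = c *: x.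

Definition Cmul (X : pt -> Prop) (y : pt) : Prop :=
  exists (c : R[i]) (x : pt), X x /\ y = c *: x.

End Defs.

(* On the unit sphere the complex tangent cone LD^*(A) is exactly S^1 D(A): if c_i w_i -> l
   with w_i in A, w_i -> 0 and |l| = 1, extract a subsequence along which the phases
   c_i / |c_i| converge to some v in S^1 (Bolzano-Weierstrass); then the directions
   w_i / |w_i| converge to v^-1 l, which therefore lies in D(A).  Hence (SSP) together
   with S^1 D(A) = D(A) is (CSSP).  Conversely, if A satisfies (CSSP) and d in D(A) is
   the limit direction of x_i in A, apply (CSSP) to the rotated sequence c x_i: the points
   of A it provides have limit direction c d, so S^1 D(A) is contained in D(A).
   For S^1 A, rotate a test sequence of direction v d (d in D(A)) back by v^-1, apply
   (SSP) to A and rotate the answer forward; C A is a complex cone, and a cone satisfies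
   (CSSP) trivially with b_m = |a_m| c_m w_m. *)

From mathcomp Require Import all_boot all_order all_algebra all_classical all_reals.
From mathcomp Require Import complex.
From mathcomp Require Import topology normedtype sequences.
From mathcomp Require Import ring lra.
Import ComplexField.Normc.
Import Order.TTheory GRing.Theory Num.Theory.
Import numFieldNormedType.Exports.
Set Implicit Arguments. Unset Strict Implicit. Unset Printing Implicit Defensive.
Local Open Scope ring_scope.

Section CauchySchwarz.
Variables (R : rcfType) (I : finType).
Implicit Types f g : I -> R.

Lemma sumr_sqr_ge0 f : 0 <= \sum_i f i ^+ 2.
Proof. by apply: sumr_ge0 => i _; exact: sqr_ge0. Qed.

Lemma sum_mul_sqr_le f g :
  (\sum_i f i * g i) ^+ 2 <= (\sum_i f i ^+ 2) * \sum_i g i ^+ 2.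
Proof.
set S := \sum_i f i ^+ 2; set T := \sum_i g i ^+ 2; set P := \sum_i f i * g i.
have [S0|S_neq0] := eqVneq S 0.
  have f0 i : f i = 0.
    by apply/eqP; rewrite -sqrf_eq0; apply/eqP/(psumr_eq0P _ S0) => // j _; exact: sqr_ge0.
  by rewrite /P big1 ?S0 ?mul0r ?expr0n // => i _; rewrite f0 mul0r.
have S_gt0 : 0 < S by rewrite lt_def S_neq0 sumr_sqr_ge0.
have := sumr_sqr_ge0 (fun i => P * f i - S * g i).
have -> : \sum_i (P * f i - S * g i) ^+ 2 = S * (S * T - P ^+ 2).
  rewrite (eq_bigr (fun i => P ^+ 2 * f i ^+ 2 + (- (2 * P * S)) * (f i * g i)
                             + S ^+ 2 * g i ^+ 2)) => [|i _]; last by ring.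
  by rewrite !big_split /= -!mulr_sumr -/S -/T -/P; ring.
by rewrite pmulr_rge0 // subr_ge0.
Qed.

Lemma CauchySchwarz_sum f g :
  \sum_i f i * g i <= Num.sqrt (\sum_i f i ^+ 2) * Num.sqrt (\sum_i g i ^+ 2).
Proof.
rewrite -sqrtrM ?sumr_sqr_ge0 //.
apply: le_trans (real_ler_norm _) _; first exact: num_real.
by rewrite -sqrtr_sqr ler_wsqrtr // sum_mul_sqr_le.
Qed.

Lemma Minkowski_sum f g :
  Num.sqrt (\sum_i (f i + g i) ^+ 2) <=
  Num.sqrt (\sum_i f i ^+ 2) + Num.sqrt (\sum_i g i ^+ 2).
Proof.
rewrite -(ler_pXn2r (n := 2)) // ?nnegrE ?addr_ge0 ?sqrtr_ge0 //.
rewrite sqrrD !sqr_sqrtr ?sumr_sqr_ge0 //.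
under eq_bigr do rewrite sqrrD.
rewrite !big_split /= lerD2r lerD2l mulr2n.
by apply: lerD; exact: CauchySchwarz_sum.
Qed.

End CauchySchwarz.

Section ComplexModulus.
Variable R : rcfType.
Implicit Types (c z : R[i]) (r s : R).

Lemma normc_ge0 c : 0 <= normc c.
Proof. by case: c => a b; exact: sqrtr_ge0. Qed.

Lemma normc_sqr c : normc c ^+ 2 = complex.Re c ^+ 2 + complex.Im c ^+ 2.
Proof. by case: c => a b /=; rewrite sqr_sqrtr // addr_ge0 // sqr_ge0. Qed.

Lemma normc_real r : normc (Complex r 0) = `|r|.
Proof. by rewrite /= expr0n /= addr0 sqrtr_sqr. Qed.

Lemma mulc_real r s : Complex r 0 * Complex s 0 = Complex (r * s) 0 :> R[i].
Proof. by apply/eqP; rewrite eq_complex /= !mulr0 !mul0r subr0 addr0 !eqxx. Qed.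

Lemma normr_complex c : `|c| = Complex (normc c) 0.
Proof. by rewrite normc_def; case: c. Qed.

Lemma normr_eq1 c : `|c| = 1 <-> normc c = 1.
Proof. by rewrite normr_complex; split => [[]|->]. Qed.

Lemma normc1_neq0 c : normc c = 1 -> c != 0.
Proof. by move=> c1; apply: contra_eqN c1 => /eqP->; rewrite normc0 eq_sym oner_eq0. Qed.

Lemma normc_ge_Re z : `|complex.Re z| <= normc z.
Proof.
by case: z => a b /=; rewrite -sqrtr_sqr ler_wsqrtr // lerDl sqr_ge0.
Qed.

Lemma normc_ge_Im z : `|complex.Im z| <= normc z.
Proof.
by case: z => a b /=; rewrite -sqrtr_sqr ler_wsqrtr // lerDr sqr_ge0.
Qed.

Lemma normc_le_ReIm z : normc z <= `|complex.Re z| + `|complex.Im z|.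
Proof.
case: z => a b /=; have ab_ge0 : 0 <= `|a| + `|b| by rewrite addr_ge0.
rewrite -(ger0_norm ab_ge0) -(sqrtr_sqr (`|a| + `|b|)) ler_wsqrtr //.
by rewrite sqrrD !real_normK ?num_real // -addrA lerD2l lerDr mulrn_wge0 ?mulr_ge0.
Qed.

End ComplexModulus.

Section EuclideanNorm.
Variables (R : realType) (n : nat).
Local Notation pt := 'rV[R[i]]_n.
Implicit Types (x y : pt) (c : R[i]).

Lemma cnormE x : cnorm x = Num.sqrt (\sum_j normc (x 0 j) ^+ 2).
Proof. by rewrite /cnorm; under eq_bigr do rewrite -normc_sqr. Qed.

Lemma cnorm_ge0 x : 0 <= cnorm x.
Proof. exact: sqrtr_ge0. Qed.

Lemma cnormZ c x : cnorm (c *: x) = normc c * cnorm x.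
Proof.
rewrite !cnormE; under eq_bigr do rewrite mxE normcM exprMn.
by rewrite -mulr_sumr sqrtrM ?sqr_ge0 // sqrtr_sqr ger0_norm ?normc_ge0.
Qed.

Lemma cnorm0 : cnorm (0 : pt) = 0.
Proof. by rewrite -(scale0r (0 : pt)) cnormZ normc0 mul0r. Qed.

Lemma cnorm_eq0 x : (cnorm x == 0) = (x == 0).
Proof.
apply/idP/eqP => [|->]; last by rewrite cnorm0.
rewrite cnormE sqrtr_eq0 => x_le0; apply/matrixP => i j; rewrite ord1 !mxE.
apply: eq0_normc; apply/eqP; rewrite -sqrf_eq0; apply/eqP.
have sqr_normc_ge0 k : 0 <= normc (x 0 k) ^+ 2 by exact: sqr_ge0.
have sum0 : \sum_k normc (x 0 k) ^+ 2 = 0.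
  by apply/eqP; rewrite eq_le x_le0 sumr_ge0.
exact: (psumr_eq0P (fun k _ => sqr_normc_ge0 k) sum0).
Qed.

Lemma cnorm_gt0 x : (0 < cnorm x) = (x != 0).
Proof. by rewrite lt_def cnorm_ge0 andbT cnorm_eq0. Qed.

Lemma cnormN x : cnorm (- x) = cnorm x.
Proof. by rewrite -scaleN1r cnormZ normcN normc1 mul1r. Qed.

Lemma cnorm_distC x y : cnorm (x - y) = cnorm (y - x).
Proof. by rewrite -cnormN opprB. Qed.

Lemma cnormD x y : cnorm (x + y) <= cnorm x + cnorm y.
Proof.
rewrite !cnormE; apply: le_trans (Minkowski_sum _ _); rewrite ler_wsqrtr //.
apply: ler_sum => j _; rewrite mxE lerXn2r ?nnegrE ?addr_ge0 ?normc_ge0 //.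
exact: le_normcD.
Qed.

Lemma lerB_cnorm_dist x y : cnorm x - cnorm y <= cnorm (x - y).
Proof. by have := cnormD (x - y) y; rewrite subrK; lra. Qed.

Lemma ler_cnorm_dist x y : `|cnorm x - cnorm y| <= cnorm (x - y).
Proof.
have := lerB_cnorm_dist y x; rewrite cnorm_distC ler_norml lerB_cnorm_dist andbT; lra.
Qed.

End EuclideanNorm.

Section Normalization.
Variables (R : realType) (n : nat).
Local Notation pt := 'rV[R[i]]_n.
Implicit Types (x y : pt) (c : R[i]).

Lemma cnorm_nrmz x : x != 0 -> cnorm (nrmz x) = 1.
Proof.
move=> x0; rewrite cnormZ normc_real ger0_norm ?invr_ge0 ?cnorm_ge0 //.
by rewrite mulVf // cnorm_eq0.
Qed.

Lemma nrmz_id x : cnorm x = 1 -> nrmz x = x.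
Proof. by move=> x1; rewrite /nrmz x1 invr1 scale1r. Qed.

Lemma nrmzK x : Complex (cnorm x) 0 *: nrmz x = x.
Proof.
have [->|x0] := eqVneq x 0; first by rewrite /nrmz !scaler0.
by rewrite scalerA mulc_real mulfV ?cnorm_eq0 // scale1r.
Qed.

Lemma nrmzZ c x : nrmz (c *: x) = (c * Complex (normc c)^-1 0) *: nrmz x.
Proof.
by rewrite /nrmz cnormZ invfM -mulc_real !scalerA mulrC mulrA.
Qed.

Lemma nrmzZ_unit c x : normc c = 1 -> nrmz (c *: x) = c *: nrmz x.
Proof. by move=> c1; rewrite nrmzZ c1 invr1 mulr1. Qed.

Lemma cnorm_nrmzB x y : x != 0 -> y != 0 ->
  cnorm (nrmz x - nrmz y) <= 2 * cnorm (x - y) / cnorm x.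
Proof.
rewrite -!cnorm_gt0 => x_gt0 y_gt0.
set X := cnorm x; set Y := cnorm y; set d := cnorm (x - y).
have -> : nrmz x - nrmz y = Complex X^-1 0 *: (x - y) + Complex (X^-1 - Y^-1) 0 *: y.
  have -> : Complex (X^-1 - Y^-1) 0 = Complex X^-1 0 - Complex Y^-1 0 :> R[i].
    by apply/eqP; rewrite eq_complex /= subr0 !eqxx.
  by rewrite scalerBl scalerBr addrA subrK.
apply: le_trans (cnormD _ _) _; rewrite !cnormZ !normc_real.
have dY : `|Y - X| <= d by rewrite /d cnorm_distC; exact: ler_cnorm_dist.
have -> : `|X^-1 - Y^-1| * Y = `|Y - X| / X.
  have e : (X^-1 - Y^-1) * Y = (Y - X) / X by field; rewrite !gt_eqF.
  rewrite -[Y in _ * Y = _](ger0_norm (ltW y_gt0)) -normrM e normrM normfV.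
  by rewrite (ger0_norm (ltW x_gt0)).
rewrite ger0_norm ?invr_ge0 ?(ltW x_gt0) // mulrC -mulrA mulr2n mulrDl mul1r.
by rewrite lerD2l ler_pM2r ?invr_gt0.
Qed.

End Normalization.

Definition ultimately (P : nat -> Prop) := exists N, forall m, (N <= m)%N -> P m.

Lemma ultimately_and (P Q : nat -> Prop) :
  ultimately P -> ultimately Q -> ultimately (fun m => P m /\ Q m).
Proof.
move=> [N1 PN1] [N2 QN2]; exists (maxn N1 N2) => m; rewrite geq_max => /andP[m1 m2].
by split; [exact: PN1 | exact: QN2].
Qed.

Lemma ultimately_mono (P Q : nat -> Prop) :
  (forall m, P m -> Q m) -> ultimately P -> ultimately Q.
Proof. by move=> PQ [N PN]; exists N => m /PN /PQ. Qed.

Lemma ultimately_sub (P : nat -> Prop) (f : nat -> nat) :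
  (forall k, (k <= f k)%N) -> ultimately P -> ultimately (fun k => P (f k)).
Proof. by move=> f_ge [N PN]; exists N => k /leq_trans /(_ (f_ge k)) /PN. Qed.

Section Convergence.
Variables (R : realType) (n : nat).
Local Notation pt := 'rV[R[i]]_n.
Implicit Types (u v : nat -> pt) (l : pt).

Lemma cvg_pt_sub u l (f : nat -> nat) :
  (forall k, (k <= f k)%N) -> cvg_pt u l -> cvg_pt (fun k => u (f k)) l.
Proof. by move=> f_ge ul e /ul; exact: ultimately_sub. Qed.

Lemma cvg_pt_close u v l :
  (forall e : R, 0 < e -> ultimately (fun m => cnorm (v m - u m) < e)) ->
  cvg_pt u l -> cvg_pt v l.
Proof.
move=> vu ul e e_gt0; have e2_gt0 : 0 < e / 2 by rewrite divr_gt0.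
apply: ultimately_mono (ultimately_and (vu _ e2_gt0) (ul _ e2_gt0)) => m [vum uml].
by rewrite -[v m](subrK (u m)) -addrA; apply: le_lt_trans (cnormD _ _) _; lra.
Qed.

Lemma cvg_ptZ (c : R[i]) u l : cvg_pt u l -> cvg_pt (fun m => c *: u m) (c *: l).
Proof.
move=> ul e e_gt0.
have c1_gt0 : 0 < normc c + 1 by rewrite ltr_wpDl ?normc_ge0.
apply: ultimately_mono (ul _ (divr_gt0 e_gt0 c1_gt0)) => m uml.
rewrite -scalerBr cnormZ; apply: le_lt_trans (_ : normc c * (e / (normc c + 1)) < e).
  by rewrite ler_wpM2l ?normc_ge0 ?ltW.
by rewrite mulrA ltr_pdivrMr // mulrDr mulr1 mulrC ltrDl.
Qed.

Lemma cvg_pt0Z (c : R[i]) u : cvg_pt u 0 -> cvg_pt (fun m => c *: u m) 0.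
Proof. by move/(cvg_ptZ c); rewrite scaler0. Qed.

Lemma cvg_pt_cnorm1 u l : (forall m, cnorm (u m) = 1) -> cvg_pt u l -> cnorm l = 1.
Proof.
move=> u1 ul; apply/eqP/negPn/negP; rewrite -subr_eq0 -normr_gt0 => dl.
have [N uNl] := ul _ dl.
have := uNl N (leqnn N); have := ler_cnorm_dist l (u N); rewrite u1 cnorm_distC; lra.
Qed.

Lemma cvg_pt_nrmz u l : cnorm l = 1 -> cvg_pt u l -> cvg_pt (fun m => nrmz (u m)) l.
Proof.
move=> l1 ul e e_gt0; set d := Num.min (e / 4) (2^-1).
have d_gt0 : 0 < d by rewrite lt_min divr_gt0 //= invr_gt0.
apply: ultimately_mono (ul _ d_gt0) => m; rewrite lt_min => /andP[ule ul2].
have um_ge : 2^-1 <= cnorm (u m) by have := lerB_cnorm_dist l (u m); rewrite cnorm_distC; lra.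
have um0 : u m != 0 by rewrite -cnorm_gt0; apply: lt_le_trans um_ge; rewrite invr_gt0.
have l0 : l != 0 by rewrite -cnorm_gt0 l1.
rewrite -[X in nrmz _ - X]nrmz_id //; apply: le_lt_trans (cnorm_nrmzB um0 l0) _.
rewrite ltr_pdivrMr ?cnorm_gt0 //; have := cnorm_ge0 (u m - l); nra.
Qed.

End Convergence.

Section BolzanoWeierstrass.
Variable R : realType.
Implicit Types M : R.

Lemma real_bolzano_weierstrass (s : nat -> R) M : (forall i, `|s i| <= M) ->
  exists (p : R) (f : nat -> nat), (forall k, (k <= f k)%N) /\
    forall e : R, 0 < e -> ultimately (fun k => `|s (f k) - p| < e).
Proof.
move=> s_le; have s_bnd : bounded_fun s.
  by exists M; split; rewrite ?num_real // => N M_lt x _; apply: le_trans (s_le x) (ltW _).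
have [f /increasing_seqP f_incr /cvg_ex[p sfp]] := bolzano_weierstrass s_bnd.
exists p, f; split; first by elim=> // k IHk; apply: leq_ltn_trans IHk (f_incr k).
move=> e e_gt0; have [N _ sN] := proj1 (cvgrPdist_lt _ _) sfp e e_gt0.
by exists N => k /sN; rewrite distrC.
Qed.

Lemma complex_bolzano_weierstrass (u : nat -> R[i]) M : (forall i, normc (u i) <= M) ->
  exists (v : R[i]) (f : nat -> nat), (forall k, (k <= f k)%N) /\
    forall e : R, 0 < e -> ultimately (fun k => normc (u (f k) - v) < e).
Proof.
move=> u_le.
have [p [f [f_ge Re_cvg]]] :=
  real_bolzano_weierstrass (fun i => le_trans (normc_ge_Re _) (u_le i)).
have [q [g [g_ge Im_cvg]]] :=
  real_bolzano_weierstrass (fun i => le_trans (normc_ge_Im _) (u_le (f i))).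
exists (Complex p q), (fun k => f (g k)); split => [k|e e_gt0].
  exact: leq_trans (g_ge k) (f_ge _).
have e2_gt0 : 0 < e / 2 by rewrite divr_gt0.
apply: ultimately_mono (ultimately_and (ultimately_sub g_ge (Re_cvg _ e2_gt0))
  (Im_cvg _ e2_gt0)) => k [Re_lt Im_lt].
apply: le_lt_trans (normc_le_ReIm _) _.
by case: (u (f (g k))) Re_lt Im_lt => a b /= Re_lt Im_lt; lra.
Qed.

End BolzanoWeierstrass.

Section PhaseLimits.
Variables (R : realType) (n : nat).
Local Notation pt := 'rV[R[i]]_n.
Implicit Types (v : R[i]) (u : nat -> R[i]).

Lemma normc_cvg_eq1 u v : ultimately (fun k => normc (u k) = 1) ->
  (forall e : R, 0 < e -> ultimately (fun k => normc (u k - v) < e)) -> normc v = 1.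
Proof.
move=> u1 uv; apply/eqP/negPn/negP; rewrite -subr_eq0 -normr_gt0 => dv.
have [N /(_ N (leqnn N)) [uN1 uNv]] := ultimately_and u1 (uv _ dv).
have := le_normcD (u N - v) v; have := le_normcD (v - u N) (u N).
rewrite !subrK -[normc (v - _)]normcN opprB uN1 => le1 le2.
suff : `|normc v - 1| <= normc (u N - v) by lra.
by rewrite ler_norml; apply/andP; split; lra.
Qed.

Lemma cvg_pt_unscale u v (y : nat -> pt) l : normc v = 1 ->
  (forall k, cnorm (y k) = 1) ->
  (forall e : R, 0 < e -> ultimately (fun k => normc (u k - v) < e)) ->
  cvg_pt (fun k => u k *: y k) l -> cvg_pt y (v^-1 *: l).
Proof.
move=> v1 y1 uv uyl; have v0 := normc1_neq0 v1.
apply: cvg_pt_close (cvg_ptZ v^-1 uyl) => e /uv; apply: ultimately_mono => k uvk.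
(* [y_k - v^-1 u_k y_k = v^-1 (v - u_k) y_k], a vector of length [|u_k - v|] *)
rewrite -[X in X - _]scale1r -(mulVf v0) -!scalerA -scalerBr -scalerBl.
by rewrite !cnormZ normcV v1 invr1 mul1r y1 mulr1 -normcN opprB.
Qed.

End PhaseLimits.

Section TangentCones.
Variables (R : realType) (n : nat).
Local Notation pt := 'rV[R[i]]_n.
Implicit Types (A S T : pt -> Prop) (a b x : nat -> pt) (l : pt) (c : R[i]).

Definition tends_dir a l :=
  (forall m, a m != 0) /\ cvg_pt a 0 /\ cvg_pt (fun m => nrmz (a m)) l.

Lemma tends_dir_cnorm1 a l : tends_dir a l -> cnorm l = 1.
Proof. by move=> [a0 [_ al]]; apply: cvg_pt_cnorm1 al => m; exact: cnorm_nrmz. Qed.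

Lemma tends_dirZ c a l : normc c = 1 -> tends_dir a l ->
  tends_dir (fun m => c *: a m) (c *: l).
Proof.
move=> c1 [a0 [a_cvg al]]; split; [|split].
- by move=> m; rewrite scaler_eq0 negb_or (normc1_neq0 c1) a0.
- exact: cvg_pt0Z.
- move=> e /(cvg_ptZ c al); apply: ultimately_mono => m.
  by rewrite nrmzZ_unit.
Qed.

Lemma approach_dirP S a : approach_dir S a <-> exists2 l, tends_dir a l & S l.
Proof.
rewrite /approach_dir; split=> [[a0 [a_cvg [l [al Sl]]]] | [l [a0 [a_cvg al]] Sl]].
  by exists l => //; split=> // m; apply/eqP.
by split=> [m|]; [apply/eqP | split=> //; exists l].
Qed.

Lemma approach_dir_sub S T a :
  (forall l, S l -> T l) -> approach_dir S a -> approach_dir T a.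
Proof. by move=> ST /approach_dirP[l al /ST Tl]; apply/approach_dirP; exists l. Qed.

Lemma DsetP A l : Dset A l <-> exists2 x, (forall i, A (x i)) & tends_dir x l.
Proof.
split=> [[_ [x [Ax [x_cvg xl]]]] | [x Ax xl]].
  by exists x => [i|]; [case: (Ax i) | split=> // i; apply/eqP; case: (Ax i)].
split; first exact: tends_dir_cnorm1 xl.
by case: xl => x0 [x_cvg xl]; exists x; split=> // i; split=> //; apply/eqP.
Qed.

Lemma Dset_S1mul A l : Dset A l -> S1mul (Dset A) l.
Proof. by exists 1, l; rewrite normr1 scale1r. Qed.

Lemma S1mul_Dset_LDstar A l : S1mul (Dset A) l -> LDstar A l.
Proof.
move=> [c [d [_ [/DsetP[x Ax [x0 [x_cvg xd]]] ->]]]].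
exists (fun i => c * Complex (cnorm (x i))^-1 0), x; split=> [i|].
  by split=> //; apply/eqP.
split=> // e /(cvg_ptZ c xd); apply: ultimately_mono => m.
by rewrite -scalerA.
Qed.

Lemma Dset_LDstar A l : Dset A l -> LDstar A l.
Proof. by move/Dset_S1mul/S1mul_Dset_LDstar. Qed.

Lemma LDstar_S1mul A l : LDstar (S1mul A) l -> LDstar A l.
Proof.
move=> [c [w [S1Aw [w_cvg cwl]]]].
have /choice[g gP] : forall i, exists uy : R[i] * pt,
    [/\ normc uy.1 = 1, A uy.2 & w i = uy.1 *: uy.2].
  by move=> i; have [[u [y [/normr_eq1 u1 [Ay ->]]]] _] := S1Aw i; exists (u, y).
exists (fun i => c i * (g i).1), (fun i => (g i).2); split=> [i|].
  have [_ Ag wg] := gP i; split=> // g0; case: (S1Aw i) => _; apply.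
  by rewrite wg g0 scaler0.
split=> e e_gt0.
  apply: ultimately_mono (w_cvg _ e_gt0) => m.
  by have [g1 _ ->] := gP m; rewrite !subr0 cnormZ g1 mul1r.
apply: ultimately_mono (cwl _ e_gt0) => m.
by have [_ _ ->] := gP m; rewrite scalerA.
Qed.

Lemma LDstar_unit_S1mul_Dset A l : cnorm l = 1 -> LDstar A l -> S1mul (Dset A) l.
Proof.
move=> l1 [c [w [Aw [w_cvg cwl]]]].
have w0 i : w i != 0 by apply/eqP; case: (Aw i).
pose u i := c i * Complex (normc (c i))^-1 0.
have u_le1 i : normc (u i) <= 1.
  rewrite normcM normc_real ger0_norm ?invr_ge0 ?normc_ge0 //.
  by have [->|c0] := eqVneq (normc (c i)) 0; rewrite ?mul0r // mulfV.
have uw_l : cvg_pt (fun i => u i *: nrmz (w i)) l.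
  by move=> e /(cvg_pt_nrmz l1 cwl); apply: ultimately_mono => i; rewrite nrmzZ.
have u1 : ultimately (fun i => normc (u i) = 1).
  have half_gt0 : (0 : R) < 2^-1 by rewrite invr_gt0.
  apply: ultimately_mono (cwl _ half_gt0) => i cwli.
  have c0 : normc (c i) != 0.
    apply: contraTneq cwli => /eq0_normc ->; rewrite scale0r sub0r cnormN l1; lra.
  by rewrite normcM normc_real ger0_norm ?invr_ge0 ?normc_ge0 // mulfV.
have [v [f [f_ge uv]]] := complex_bolzano_weierstrass u_le1.
have v1 : normc v = 1 := normc_cvg_eq1 (ultimately_sub f_ge u1) uv.
exists v, (v^-1 *: l); split; first exact/normr_eq1.
split; last by rewrite scalerA mulfV ?normc1_neq0 // scale1r.
apply/DsetP; exists (fun k => w (f k)) => [k|]; first by case: (Aw (f k)).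
split=> [k|]; first exact: w0.
split; first exact: cvg_pt_sub w_cvg.
apply: cvg_pt_unscale v1 _ uv (cvg_pt_sub f_ge uw_l) => k.
exact: cnorm_nrmz.
Qed.

Lemma approach_LDstar_S1mul_Dset A a :
  approach_dir (LDstar A) a -> approach_dir (S1mul (Dset A)) a.
Proof.
move=> /approach_dirP[l al LDl]; apply/approach_dirP; exists l => //.
exact: LDstar_unit_S1mul_Dset (tends_dir_cnorm1 al) LDl.
Qed.

End TangentCones.

Section SeparationProperties.
Variables (R : realType) (n : nat).
Local Notation pt := 'rV[R[i]]_n.
Implicit Types (A : pt -> Prop) (a b : nat -> pt) (l : pt) (c : R[i]).

Lemma negligibleZ c a b :
  negligible a b -> negligible (fun m => c *: a m) (fun m => c *: b m).
Proof.
move=> ab e /ab; apply: ultimately_mono => m [ab_a ab_b].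
by rewrite -scalerBr !cnormZ; split; rewrite mulrCA ler_wpM2l ?normc_ge0.
Qed.

Lemma negligible_l a b :
  (forall e : R, 0 < e -> ultimately (fun m => cnorm (a m - b m) <= e * cnorm (a m))) ->
  negligible a b.
Proof.
move=> ab e e_gt0; pose d := Num.min (e / 2) 2^-1.
have d_gt0 : 0 < d by rewrite lt_min divr_gt0 //= invr_gt0.
have d_le_e2 : d <= e / 2 by rewrite ge_min lexx.
have d_le_half : d <= 2^-1 by rewrite ge_min lexx orbT.
apply: ultimately_mono (ab _ d_gt0) => m abm.
have a_ge0 := cnorm_ge0 (a m); have b_ge0 := cnorm_ge0 (b m).
have da_le : d * cnorm (a m) <= 2^-1 * cnorm (a m) by exact: ler_wpM2r.
have a_le2b : cnorm (a m) <= 2 * cnorm (b m).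
  by have := lerB_cnorm_dist (a m) (b m); lra.
have dab : d * cnorm (a m) <= e / 2 * (2 * cnorm (b m)).
  apply: le_trans (ler_wpM2l (ltW d_gt0) a_le2b) _.
  by apply: ler_wpM2r; rewrite ?mulr_ge0.
split; first by apply: le_trans abm (ler_wpM2r a_ge0 _); lra.
by apply: le_trans abm (le_trans dab _); rewrite mulrA divfK ?pnatr_eq0.
Qed.

Lemma Dset_of_negligible A a b l :
  tends_dir a l -> (forall m, A (b m)) -> negligible a b -> Dset A l.
Proof.
move=> [a0 [a_cvg al]] Ab ab.
have half_gt0 : (0 : R) < 2^-1 by rewrite invr_gt0.
have [N abN] := ab _ half_gt0.
have b0 m : (N <= m)%N -> b m != 0.
  move=> /abN[abm _]; apply/negP => /eqP bm0; move: abm; rewrite bm0 subr0.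
  by have := a0 m; rewrite -cnorm_gt0; lra.
have shift k : (k <= k + N)%N by exact: leq_addr.
apply/DsetP; exists (fun k => b (k + N)) => [k|]; first exact: Ab.
split=> [k|]; first exact/b0/leq_addl.
split.
  apply: cvg_pt_close (cvg_pt_sub shift a_cvg) => e e_gt0.
  apply: ultimately_mono (ultimately_sub shift (a_cvg _ e_gt0)) => k.
  have [abk _] := abN _ (leq_addl k N); rewrite subr0 cnorm_distC.
  by have := cnorm_ge0 (a (k + N)); lra.
apply: cvg_pt_close (cvg_pt_sub shift al) => e e_gt0.
have e4_gt0 : 0 < e / 4 by rewrite divr_gt0.
apply: ultimately_mono (ultimately_sub shift (ab _ e4_gt0)) => k [_ abk].
have bk_gt0 : 0 < cnorm (b (k + N)) by rewrite cnorm_gt0 b0 ?leq_addl.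
apply: le_lt_trans (cnorm_nrmzB (b0 _ (leq_addl k N)) (a0 _)) _.
rewrite ltr_pdivrMr // cnorm_distC.
by have := mulr_gt0 e_gt0 bk_gt0; nra.
Qed.

Lemma CSSP_S1mul_Dset A l : CSSP A -> S1mul (Dset A) l -> Dset A l.
Proof.
move=> CA S1l; have LDl := S1mul_Dset_LDstar S1l.
case: S1l => c [d [/normr_eq1 c1 [/DsetP[x Ax xd] el]]].
have cxl : tends_dir (fun m => c *: x m) l by rewrite el; exact: tends_dirZ.
have [b [Ab cxb]] : exists b, (forall m, A (b m)) /\ negligible (fun m => c *: x m) b.
  by apply: CA; apply/approach_dirP; exists l.
exact: Dset_of_negligible cxl Ab cxb.
Qed.

Lemma SSP_S1mul_Dset A a : SSP A -> approach_dir (S1mul (Dset A)) a ->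
  exists b, (forall m, S1mul A (b m)) /\ negligible a b.
Proof.
move=> SA /approach_dirP[l al [v [d [/normr_eq1 v1 [Dd el]]]]]; subst l.
have v0 := normc1_neq0 v1.
have ad : tends_dir (fun m => v^-1 *: a m) d.
  have := tends_dirZ (_ : normc v^-1 = 1) al; rewrite scalerA mulVf // scale1r.
  by apply; rewrite normcV v1 invr1.
have [b [Ab ab]] : exists b, (forall m, A (b m)) /\ negligible (fun m => v^-1 *: a m) b.
  by apply: SA; apply/approach_dirP; exists d.
exists (fun m => v *: b m); split=> [m|].
  by exists v, (b m); split=> //; exact/normr_eq1.
have -> : a = (fun m => v *: (v^-1 *: a m)).
  by apply: funext => m; rewrite scalerA mulfV // scale1r.
exact: negligibleZ.
Qed.

Lemma CSSP_cone A : (forall c x, A x -> A (c *: x)) -> CSSP A.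
Proof.
move=> A_cone a /approach_dirP[l [a0 [_ al]] [c [w [Aw [_ cwl]]]]].
exists (fun m => Complex (cnorm (a m)) 0 *: (c m *: w m)); split=> [m|].
  by do 2 apply: (A_cone); case: (Aw m).
apply: negligible_l => e e_gt0; have e2_gt0 : 0 < e / 2 by rewrite divr_gt0.
apply: ultimately_mono (ultimately_and (al _ e2_gt0) (cwl _ e2_gt0)) => m [alm cwlm].
rewrite -{1}[a m]nrmzK -scalerBr cnormZ normc_real ger0_norm ?cnorm_ge0 //.
rewrite mulrC ler_wpM2r ?cnorm_ge0 // -[nrmz _](subrK l) -addrA.
by apply: le_trans (cnormD _ _) _; rewrite (cnorm_distC l); lra.
Qed.

End SeparationProperties.

Theorem proposition2p41 (R : realType) (n : nat) (A : 'rV[R[i]]_n -> Prop) :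
  zero_in_closure A ->
  (CSSP A <-> SSP A /\ (forall a, S1mul (Dset A) a <-> Dset A a)) /\
  (SSP A -> CSSP (S1mul A) /\ CSSP (Cmul A)).
Proof.
move=> _; split; [split|].
- move=> CA; split=> [a /(approach_dir_sub (@Dset_LDstar _ _ A))|l]; first exact: CA.
  by split; [exact: CSSP_S1mul_Dset | exact: Dset_S1mul].
- move=> [SA S1D] a /approach_LDstar_S1mul_Dset /(approach_dir_sub (fun l => proj1 (S1D l))).
  exact: SA.
- move=> SA; split.
    move=> a /(approach_dir_sub (@LDstar_S1mul _ _ A)) /approach_LDstar_S1mul_Dset.
    exact: SSP_S1mul_Dset.
  by apply: CSSP_cone => c _ [d [y [Ay ->]]]; exists (c * d), y; rewrite scalerA.
Qed.
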